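(* Let $a$ be a complex number of modulus one and let $H$ be a $6\times 6$ complex Hadamard matrix all of whose entries lie in $\{1,a,-a\}$. Then $H$ is complex equivalent to $$H^{(1)}=\begin{bmatrix} i&1&1&1&1&1\\ 1&i&1&1&-1&-1\\ 1&1&i&-1&1&-1\\ 1&1&-1&i&-1&1\\ 1&-1&1&-1&i&1\\ 1&-1&-1&1&1&i \end{bmatrix}.$$
   Context: A complex Hadamard matrix (CHM) of order $n$ is an $n\times n$ complex matrix $H$ all of whose entries have modulus one and which satisfies $HH^\dagger=nI$. A monomial unitary matrix is a unitary matrix each of whose rows and columns has exactly one nonzero entry, that entry having modulus one. Two $n\times n$ matrices $U,V$ are complex equivalent if $U=PVQ$ for some $n\times n$ monomial unitary matrices $P,Q$. *)

From HB Require Import structures.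
From mathcomp Require Import all_boot all_order all_algebra.
From mathcomp Require Import complex.
From mathcomp Require Import reals.
Set Implicit Arguments. Unset Strict Implicit. Unset Printing Implicit Defensive.
Import Order.TTheory GRing.Theory Num.Theory.
Local Open Scope ring_scope.

Definition ctrmx {C : numClosedFieldType} {m n : nat} (A : 'M[C]_(m, n)) : 'M[C]_(n, m) :=
  map_mx Num.conj A^T.

Definition unitary_mx {C : numClosedFieldType} {n : nat} (U : 'M[C]_n) : Prop :=
  U *m ctrmx U = 1%:M.

Definition is_CHM {C : numClosedFieldType} {n : nat} (H : 'M[C]_n) : Prop :=
  (forall i j, `|H i j| = 1) /\ H *m ctrmx H = n%:R%:M.

Definition monomial_unitary {C : numClosedFieldType} {n : nat} (P : 'M[C]_n) : Prop :=
  unitary_mx P /\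
  (forall i : 'I_n, #|[set j | P i j != 0]| = 1%N) /\
  (forall j : 'I_n, #|[set i | P i j != 0]| = 1%N) /\
  (forall i j, P i j != 0 -> `|P i j| = 1).

Definition complex_equivalent {C : numClosedFieldType} {n : nat} (U V : 'M[C]_n) : Prop :=
  exists P Q : 'M[C]_n, monomial_unitary P /\ monomial_unitary Q /\ U = P *m V *m Q.

Definition H1 {C : numClosedFieldType} : 'M[C]_6 :=
  \matrix_(i < 6, j < 6)
    nth 0 (nth [::] [:: [:: 'i; 1; 1; 1; 1; 1];
                      [:: 1; 'i; 1; 1; -1; -1];
                      [:: 1; 1; 'i; -1; 1; -1];
                      [:: 1; 1; -1; 'i; -1; 1];
                      [:: 1; -1; 1; -1; 'i; 1];
                      [:: 1; -1; -1; 1; 1; 'i]] i) j.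

From mathcomp Require Import all_boot all_algebra all_fingroup ring.
From mathcomp Require Import complex reals.
Set Implicit Arguments. Unset Strict Implicit. Unset Printing Implicit Defensive.
Import GRing.Theory Num.Theory.

(* Code the entries 1, a, -a of H by 0, 1, 2.  The inner product of two rows is
   then A + B a + D a^* with integers A, B, D depending only on the codes.  For a
   non-real unimodular a, orthogonality forces B = D and A = - B (a + a^* ), and
   since |a + a^*| < 2 either A = B = 0 or A^2 < 4 B^2: a relation between code
   rows that no longer mentions a.  An exhaustive search lists all sets of six
   pairwise related code rows.  Each of them contains two rows with A = 0 and
   B <> 0, which forces a + a^* = 0, i.e. a = i or a = -i, and for a = i each of
   them is equivalent to H^(1), as an explicit certificate shows.  For real a,
   H would be a real Hadamard matrix of order 6, which does not exist since no
   three sign vectors of length 6 are pairwise orthogonal. *)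

Section Cliques.
Variables (X : eqType) (m : rel X).

Fixpoint cliques (k : nat) (cl cands : seq X) {struct k} : seq (seq X) :=
  if k is k'.+1 then
    (fix grow cands := if cands is x :: rest then
        cliques k' (x :: cl) (filter (m x) rest) ++ grow rest else [::]) cands
  else [:: cl].

Lemma mem_cliques k cl cands s : subseq s cands -> size s = k -> pairwise m s ->
  rev s ++ cl \in cliques k cl cands.
Proof.
elim: k cl cands s => [|k IHk] cl cands s.
  by case: s => // _ _ _; rewrite mem_seq1.
elim: cands s => [|x rest IHc] [|y s] //=.
have [<- Hsub [Hs] /andP[Hall Hpw]|yx Hsub Hs Hpw] := eqP; rewrite mem_cat.
  have := IHk (y :: cl) (filter (m y) rest) s.
  rewrite subseq_filter Hall Hsub Hs Hpw => /(_ isT erefl isT).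
  by rewrite rev_cons cat_rcons => ->.
by rewrite IHc ?orbT.
Qed.

Lemma clique_in_cliques (I : eqType) (idx : seq I) (r : I -> X) (cands : seq X) :
  uniq idx -> uniq cands -> {in cands, forall x, ~~ m x x} ->
  (forall i, r i \in cands) -> (forall i j, i != j -> m (r i) (r j)) ->
  exists2 L, L \in cliques (size idx) [::] cands & perm_eq L (map r idx).
Proof.
move=> uidx ucands irr rC rel.
have rinj : injective r.
  move=> i j rij; apply/eqP; apply: contraTT (irr _ (rC j)) => /rel.
  by rewrite rij negbK.
set S := filter (mem (map r idx)) cands.
have SE : S =i map r idx.
  by move=> x; rewrite mem_filter andb_idr //= => /mapP[i _ ->].
have pS : perm_eq S (map r idx).
  by apply: uniq_perm SE; rewrite ?filter_uniq ?map_inj_uniq.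
have pwS : pairwise m S.
  apply: (@sub_in_pairwise _ (mem S) [rel x y | x != y]) (allss S) _; last first.
    by rewrite -uniq_pairwise filter_uniq.
  move=> x y; rewrite !SE => /mapP[i _ ->] /mapP[j _ ->] /=.
  by case: (eqVneq i j) => [->|/rel Hm _ //]; rewrite eqxx.
exists (rev S); last by rewrite perm_rev.
have := mem_cliques [::] (filter_subseq _ cands) (erefl _) pwS.
by rewrite cats0 (perm_size pS) size_map.
Qed.

End Cliques.

Fixpoint words (T : Type) (alpha : seq T) (n : nat) : seq (seq T) :=
  if n is n'.+1 then [seq c :: w | c <- alpha, w <- words alpha n'] else [:: [::]].

Lemma mem_words (T : eqType) (alpha w : seq T) n :
  size w = n -> {subset w <= alpha} -> w \in words alpha n.
Proof.
elim: n w => [|n IH] [|c w] //= [Hs] sub.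
apply/allpairsP; exists (c, w); split; rewrite ?sub ?mem_head //.
by apply: IH => // x xw; rewrite sub // inE xw orbT.
Qed.

Lemma words_uniq (T : eqType) (alpha : seq T) n : uniq alpha -> uniq (words alpha n).
Proof.
move=> ua; elim: n => //= n IH; apply: allpairs_uniq => // -[c w] [c' w'] _ _.
by case=> -> ->.
Qed.

Fixpoint pairsum (T : Type) (f : T -> T -> int) (r s : seq T) : int :=
  if r is x :: r' then if s is y :: s' then f x y + pairsum f r' s' else 0 else 0.

Lemma pairsum_map (T I : Type) (f : T -> T -> int) (u w : I -> T) (idx : seq I) :
  pairsum f (map u idx) (map w idx) = (\sum_(i <- idx) f (u i) (w i))%R.
Proof. by elim: idx => [|i idx IH]; rewrite ?big_nil ?big_cons //= IH. Qed.

Local Open Scope ring_scope.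

Definition dot0 (x y : nat) : int :=
  match x, y with
  | 0, 0 => 1 | 0, _ | _, 0 => 0
  | 1, 1 => 1 | 1, _ | _, 1 => -1 | _, _ => 1
  end.

Definition dota (x y : nat) : int :=
  match x, y with 1, 0 => 1 | 0, _ | 1, _ => 0 | _, 0 => -1 | _, _ => 0 end.

Definition code_orth (r s : seq nat) : bool :=
  let A := pairsum dot0 r s in let B := pairsum dota r s in
  (B == pairsum dota s r) && (if B == 0 then A == 0 else A * A < 4 * (B * B)).

Definition forces_imag (L : seq (seq nat)) : bool :=
  has (fun r => has (fun s =>
    [&& r != s, pairsum dot0 r s == 0 & pairsum dota r s != 0]) L) L.

Definition code_rows : seq (seq nat) := words (iota 0 3) 6.

Definition code_cliques : seq (seq (seq nat)) := cliques code_orth 6 [::] code_rows.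

Lemma code_orth_irrefl : {in code_rows, forall r, ~~ code_orth r r}.
Proof. by apply/allP; vm_compute. Qed.

Definition sign_dot (x y : bool) : int := if x == y then 1 else -1.

Definition sign_orth (r s : seq bool) : bool := pairsum sign_dot r s == 0.

Lemma sign_orth_irrefl : {in words [:: false; true] 6, forall r, ~~ sign_orth r r}.
Proof. by apply/allP; vm_compute. Qed.

Lemma no_three_orth_sign_rows : cliques sign_orth 3 [::] (words [:: false; true] 6) = [::].
Proof. by vm_compute. Qed.

Section Certificates.
Local Open Scope nat_scope.

Definition h1exp : seq (seq nat) :=
  [:: [:: 1; 0; 0; 0; 0; 0]; [:: 0; 1; 0; 0; 2; 2]; [:: 0; 0; 1; 2; 0; 2];
      [:: 0; 0; 2; 1; 2; 0]; [:: 0; 2; 0; 2; 1; 0]; [:: 0; 2; 2; 0; 0; 1]].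

Definition h1e (i j : nat) : nat := nth 0 (nth [::] h1exp i) j.

Definition iexp (c : nat) : nat := if c is 0 then 0 else if c is 1 then 1 else 3.

Definition entry (L : seq (seq nat)) (j l : nat) : nat := nth 0 (nth [::] L j) l.

(* Entry (j, l) of L, read as a power of i, is i^(d j + e l) H^(1)(s j, t l). *)
Definition equiv_cert (L : seq (seq nat)) (s t d e : seq nat) : bool :=
  [&& perm_eq s (iota 0 6), perm_eq t (iota 0 6) &
   all (fun j => all (fun l => iexp (entry L j l) ==
      (nth 0 d j + nth 0 e l + h1e (nth 0 s j) (nth 0 t l)) %% 4) (iota 0 6)) (iota 0 6)].

(* Only the success of this search matters, not its completeness.  The entries
   of H^(1) that are odd powers of i form its diagonal, so up to parity vectors on
   rows and columns the odd entries of an equivalent matrix form a permutation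
   [pi], and fixing [pi 0 = k] determines [pi].  Given [pi] and the row
   permutation [s], the column permutation is forced and the phases [d], [e] are
   read off the first row and column.  The permutations [s] with [P_s H^(1) P_s^T]
   equivalent to H^(1) by diagonal phases form PSL(2,5), which is 2-transitive,
   so [s] can be chosen with [s 0 = 0] and [s 1 = 1]. *)
Definition odd_one_out (r : seq bool) : nat := index (count id r == 1) r.

Definition diag_match (L : seq (seq nat)) (k : nat) : seq nat :=
  [seq odd_one_out [seq (entry L j l != 0) (+) (entry L 0 l != 0) (+) (l == k)
                   | l <- iota 0 6] | j <- iota 0 6].

Definition norm_perms : seq (seq nat) := [seq [:: 0, 1 & p] | p <- permutations (iota 2 4)].

Definition cert_of (L : seq (seq nat)) (pi s : seq nat) : seq nat * seq nat * seq nat * seq nat :=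
  let t := [seq nth 0 s (index l pi) | l <- iota 0 6] in
  let e := [seq (iexp (entry L 0 l) + 4 - h1e (nth 0 s 0) (nth 0 t l)) %% 4 | l <- iota 0 6] in
  let d := [seq (iexp (entry L j 0) + 8 - nth 0 e 0 - h1e (nth 0 s j) (nth 0 t 0)) %% 4
           | j <- iota 0 6] in
  (s, t, d, e).

Definition has_cert (L : seq (seq nat)) : bool :=
  has (fun pi => has (fun s => let: (s, t, d, e) := cert_of L pi s in equiv_cert L s t d e)
                     norm_perms)
      [seq pi <- map (diag_match L) (iota 0 6) | perm_eq pi (iota 0 6)].

Lemma has_certP L : has_cert L -> exists s t d e, equiv_cert L s t d e.
Proof.
case/hasP => pi _ /hasP[s _]; case: (cert_of L pi s) => [[[s' t] d] e] ok.
by exists s', t, d, e.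
Qed.

End Certificates.

Lemma code_cliques_certified : all (fun L => forces_imag L && has_cert L) code_cliques.
Proof. by vm_compute. Qed.

Lemma perm_of_iota n (s : seq nat) : perm_eq s (iota 0 n) ->
  exists p : {perm 'I_n}, forall i : 'I_n, val (p i) = nth 0 s i.
Proof.
move=> ps; have ss : size s = n by rewrite (perm_size ps) size_iota.
have lt (i : 'I_n) : (nth 0 s i < n)%N.
  have : nth 0 s i \in iota 0 n by rewrite -(perm_mem ps) mem_nth ?ss.
  by rewrite mem_iota.
have inj : injective (fun i : 'I_n => Ordinal (lt i)).
  move=> i j /(congr1 val) /= /eqP.
  by rewrite nth_uniq ?ss ?ltn_ord ?(perm_uniq ps) ?iota_uniq // => /eqP /val_inj.
by exists (perm inj) => i; rewrite permE.
Qed.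

Lemma nth_codom_ord (T : Type) n (x0 : T) (f : 'I_n -> T) (i : 'I_n) : nth x0 (codom f) i = f i.
Proof. by rewrite codomE (nth_map i) ?size_enum_ord // nth_ord_enum. Qed.

Section Equivalence.
Variables (C : numClosedFieldType) (n : nat).

Definition monomial_mx (s : {perm 'I_n}) (c : 'I_n -> C) : 'M[C]_n :=
  \matrix_(i, j) if j == s i then c i else 0.

Lemma monomial_mx_unitary s c : (forall i, `|c i| = 1) -> monomial_unitary (monomial_mx s c).
Proof.
move=> nc; have cnz i : c i != 0 by rewrite -normr_eq0 nc oner_eq0.
split; [|split; [|split]].
- apply/matrixP=> i i'; rewrite !mxE (bigD1 (s i)) //= big1 => [|k /negbTE ks]; last first.
    by rewrite !mxE ks mul0r.
  rewrite !mxE eqxx addr0 (inj_eq perm_inj).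
  by case: eqVneq => [<-|_]; rewrite ?mulr1n -?normCK ?nc ?expr1n // rmorph0 mulr0.
- move=> i; rewrite -(cards1 (s i)); apply: eq_card => j.
  by rewrite !inE mxE; case: ifP => _; rewrite ?cnz ?eqxx.
- move=> j; rewrite -(cards1 ((s^-1)%g j)); apply: eq_card => i.
  rewrite !inE mxE [X in _ = X]eq_sym -(canF_eq (permKV s)).
  by case: ifP => _; rewrite ?cnz ?eqxx.
- by move=> i j; rewrite mxE; case: ifP; rewrite ?nc ?eqxx.
Qed.

Lemma complex_equivalent_of (U V : 'M[C]_n) (s t : {perm 'I_n}) (c d : 'I_n -> C) :
  (forall i, `|c i| = 1) -> (forall j, `|d j| = 1) ->
  (forall i j, U i j = c i * d j * V (s i) (t j)) -> complex_equivalent U V.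
Proof.
move=> nc nd UE; exists (monomial_mx s c), (monomial_mx (t^-1)%g (d \o (t^-1)%g)).
split; first exact: monomial_mx_unitary.
split; first by apply: monomial_mx_unitary => i; apply: nd.
apply/matrixP=> i j; rewrite UE !mxE (bigD1 (t j)) //= big1 => [|k kt]; last first.
  rewrite !mxE (_ : j == _ = false) ?mulr0 //.
  by apply: contraNF kt => /eqP ->; rewrite permKV.
rewrite !mxE permK eqxx addr0 /= (bigD1 (s i)) //= big1 => [|k /negbTE ks]; last first.
  by rewrite !mxE ks mul0r.
by rewrite !mxE eqxx addr0 permK mulrAC.
Qed.

End Equivalence.

Section CodedRows.
Variable C : numClosedFieldType.
Implicit Types (a : C) (H : 'M[C]_6) (q : 'I_6 -> 'I_6 -> nat).

Definition code_val a (c : nat) : C := if c is 0%N then 1 else if c is 1%N then a else - a.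

Lemma code_val_mul_conj a x y : a * a^* = 1 ->
  code_val a x * (code_val a y)^* = (dot0 x y)%:~R + (dota x y)%:~R * a + (dota y x)%:~R * a^*.
Proof.
move=> aa; case: x => [|[|x]]; case: y => [|[|y]];
  rewrite /= ?rmorph1 ?rmorphN ?mul1r ?mulr1 ?mulrN ?mulNr ?opprK ?aa /=;
  by rewrite ?mul0r ?mul1r ?mulN1r ?addr0 ?add0r.
Qed.

Lemma nonreal_int_relation a (A B D : int) : a^* != a ->
  A%:~R + B%:~R * a + D%:~R * a^* = 0 :> C -> B = D /\ A%:~R = - (B%:~R * (a + a^*)) :> C.
Proof.
move=> nra E.
have Ec : A%:~R + B%:~R * a^* + D%:~R * a = 0 :> C.
  by move: (congr1 Num.conj E); rewrite rmorph0 !rmorphD !rmorphM !rmorph_int /= conjCK.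
have BD : B = D.
  have : (B%:~R - D%:~R) * (a - a^*) = 0 :> C.
    rewrite (_ : _ * _ = (A%:~R + B%:~R * a + D%:~R * a^*) - (A%:~R + B%:~R * a^* + D%:~R * a)).
      by rewrite E Ec subrr.
    ring.
  move/eqP; rewrite mulf_eq0 !subr_eq0 [a == _]eq_sym (negbTE nra) orbF.
  by rewrite eqr_int => /eqP.
split=> //; subst D; apply/eqP; rewrite -addr_eq0; apply/eqP; rewrite -[RHS]E; ring.
Qed.

Lemma norm_sub_conj a : a * a^* = 1 -> `|a - a^*| ^+ 2 = 4 - (a + a^*) ^+ 2.
Proof.
move=> aa; rewrite normCK rmorphB /= conjCK.
have -> : 4 = 4 * (a * a^*) :> C by rewrite aa mulr1.
ring.
Qed.

Lemma code_orth_of_orth a r s : a * a^* = 1 -> a^* != a ->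
  (pairsum dot0 r s)%:~R + (pairsum dota r s)%:~R * a + (pairsum dota s r)%:~R * a^* = 0 ->
  code_orth r s.
Proof.
move=> aa nra /(nonreal_int_relation nra) [BD EA].
rewrite /code_orth -BD eqxx /=.
set A := pairsum dot0 r s in EA *; set B := pairsum dota r s in EA *.
have [B0|Bnz] := eqVneq B 0.
  by move: EA; rewrite B0 mul0r oppr0 => /eqP; rewrite intr_eq0.
have gap : (4 * (B * B) - A * A)%:~R = (B * B)%:~R * `|a - a^*| ^+ 2 :> C.
  by rewrite norm_sub_conj // intrB !intrM EA; ring.
rewrite -subr_gt0 -(ltr0z C) gap pmulr_rgt0 ?exprn_gt0 ?normr_gt0 ?subr_eq0 1?eq_sym //.
by rewrite ltr0z -expr2 exprn_even_gt0.
Qed.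

Lemma CHM_row_orth n (H : 'M[C]_n) j k : is_CHM H -> j != k ->
  \sum_l H j l * (H k l)^* = 0.
Proof.
move=> [_ HH] jk; move: (congr1 (fun M : 'M[C]_n => M j k) HH).
rewrite !mxE (negbTE jk) mulr0n => {2}<-.
by apply: eq_bigr => l _; rewrite /ctrmx !mxE.
Qed.

Lemma code_row_dot a H q j k : a * a^* = 1 -> (forall j l, H j l = code_val a (q j l)) ->
  \sum_l H j l * (H k l)^* =
    (pairsum dot0 (codom (q j)) (codom (q k)))%:~R
    + (pairsum dota (codom (q j)) (codom (q k)))%:~R * a
    + (pairsum dota (codom (q k)) (codom (q j)))%:~R * a^*.
Proof.
move=> aa Hq; rewrite !codomE !pairsum_map !rmorph_sum !big_enum /=.
rewrite !mulr_suml -!big_split; apply: eq_bigr => l _.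
by rewrite !Hq code_val_mul_conj.
Qed.

Lemma code_clique_of_CHM a H q : a * a^* = 1 -> a^* != a -> is_CHM H ->
  (forall j l, q j l < 3)%N -> (forall j l, H j l = code_val a (q j l)) ->
  exists2 L, L \in code_cliques & perm_eq L (codom (codom \o q)).
Proof.
move=> aa nra HC qlt Hq.
have rows j : codom (q j) \in code_rows.
  apply: mem_words; first by rewrite size_codom card_ord.
  by move=> _ /codomP[l ->]; rewrite mem_iota qlt.
have orth j k : j != k -> code_orth (codom (q j)) (codom (q k)).
  move=> jk; apply: (code_orth_of_orth aa nra).
  by rewrite -(code_row_dot j k aa Hq) CHM_row_orth.
have := clique_in_cliques (enum_uniq 'I_6) (words_uniq 6 (iota_uniq 0 3)) code_orth_irrefl rows orth.
by rewrite size_enum_ord -codomE.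
Qed.

Lemma imag_of_code_clique a H q L : a * a^* = 1 -> a^* != a -> is_CHM H ->
  (forall j l, H j l = code_val a (q j l)) ->
  perm_eq L (codom (codom \o q)) -> forces_imag L -> a + a^* = 0.
Proof.
move=> aa nra HC Hq pL /hasP[r]; rewrite (perm_mem pL) => /codomP[j ->].
move=> /hasP[s]; rewrite (perm_mem pL) => /codomP[k ->] /and3P[rs /eqP A0 B0].
have jk : j != k by apply: contraNneq rs => ->.
have := CHM_row_orth HC jk; rewrite (code_row_dot j k aa Hq) => /(nonreal_int_relation nra).
case=> _; rewrite A0 => /eqP; rewrite eq_sym oppr_eq0 mulf_eq0 intr_eq0 (negbTE B0).
by move/eqP.
Qed.

Lemma unit_eq_pm1 a : a * a^* = 1 -> a^* = a -> a = 1 \/ a = -1.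
Proof.
move=> aa ra; have a2 : a * a = 1 by rewrite -{2}ra aa.
have : (a - 1) * (a + 1) = 0.
  by rewrite (_ : _ * _ = a * a - 1); [rewrite a2 subrr | ring].
by move/eqP; rewrite mulf_eq0 subr_eq0 addr_eq0 => /orP[] /eqP; [left|right].
Qed.

Lemma unit_eq_pmi a : a * a^* = 1 -> a + a^* = 0 -> a = 'i \/ a = - 'i.
Proof.
move=> aa /eqP; rewrite addrC addr_eq0 => /eqP ca.
have a2 : a * a = -1 by rewrite -aa ca mulrN opprK.
have : (a - 'i) * (a + 'i) = 0.
  by rewrite (_ : _ * _ = a * a - 'i ^+ 2); [rewrite a2 sqrCi subrr | ring].
by move/eqP; rewrite mulf_eq0 subr_eq0 addr_eq0 => /orP[] /eqP; [left|right].
Qed.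

Lemma CHM6_not_real a H : `|a| = 1 -> is_CHM H ->
  (forall i j, H i j \in [:: 1; a; - a]) -> a^* != a.
Proof.
move=> na HC Hin; apply/eqP => ra.
have aa : a * a^* = 1 by rewrite -normCK na expr1n.
have [b Hb] : exists b : 'I_6 -> 'I_6 -> bool, forall j l, H j l = (-1) ^+ b j l.
  exists (fun j l => H j l != 1) => j l; case: eqP => [-> //|ne].
  move: (Hin j l); rewrite !inE.
  by case: (unit_eq_pm1 aa ra) => ->; rewrite ?opprK; case/or3P => /eqP.
have orth j k : j != k -> sign_orth (codom (b j)) (codom (b k)).
  move=> jk; rewrite /sign_orth -(intr_eq0 C) !codomE pairsum_map rmorph_sum big_enum /=.
  apply/eqP; rewrite -[RHS](CHM_row_orth HC jk); apply: eq_bigr => l _.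
  by rewrite !Hb /sign_dot; case: (b j l); case: (b k l);
    rewrite /= ?expr0 ?expr1 ?rmorphN ?rmorph1 ?mulrNN ?mulr1 ?mulN1r ?mul1r.
have rows j : codom (b j) \in words [:: false; true] 6.
  by apply: mem_words; [rewrite size_codom card_ord | case].
have [L] := clique_in_cliques (take_uniq 3 (enum_uniq 'I_6)) (words_uniq 6 (isT : uniq [:: false; true]))
  sign_orth_irrefl rows orth.
by rewrite size_takel ?size_enum_ord // no_three_orth_sign_rows.
Qed.

Lemma code_of_entries a H : (forall i j, H i j \in [:: 1; a; - a]) ->
  exists2 q, (forall j l, q j l < 3)%N & forall j l, H j l = code_val a (q j l).
Proof.
move=> Hin; exists (fun j l => if H j l == 1 then 0%N else if H j l == a then 1%N else 2%N).
  by move=> j l; case: ifP => //; case: ifP.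
by move=> j l; move: (Hin j l); rewrite !inE; do 2?case: eqP => [-> //|_] /=; move/eqP.
Qed.

Lemma expCi4 : 'i ^+ 4 = 1 :> C.
Proof. by rewrite (_ : 4 = 2 * 2)%N // exprM sqrCi sqrrN expr1n. Qed.

Lemma H1E (i j : 'I_6) : (H1 : 'M[C]_6) i j = 'i ^+ h1e i j.
Proof.
rewrite mxE; case: i => [[|[|[|[|[|[|i]]]]]] Hi] //;
  case: j => [[|[|[|[|[|[|j]]]]]] Hj] //=; by rewrite ?expr0 ?expr1 ?sqrCi.
Qed.

Lemma code_val_i c : code_val 'i c = 'i ^+ iexp c.
Proof. by case: c => [|[|c]]; rewrite /= ?expr0 ?expr1 // exprS sqrCi mulrN1. Qed.

Lemma cert_equiv H q L s t d e : (forall j l, H j l = code_val 'i (q j l)) ->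
  perm_eq L (codom (codom \o q)) -> equiv_cert L s t d e -> complex_equivalent H H1.
Proof.
move=> Hq /(perm_iotaP [::]) [Is pIs LE] /and3P[ps pt /allP ok].
rewrite size_codom card_ord in pIs.
have [rho rhoE] := perm_of_iota pIs; have [sg sgE] := perm_of_iota ps.
have [tg tgE] := perm_of_iota pt.
apply: (@complex_equivalent_of _ _ H H1 (rho^-1 * sg)%g tg
          (fun j => 'i ^+ nth 0 d ((rho^-1)%g j)) (fun l => 'i ^+ nth 0 e l)).
- by move=> j; rewrite normrX normCi expr1n.
- by move=> l; rewrite normrX normCi expr1n.
move=> j l; rewrite permM; set m := (rho^-1)%g j.
have Em : iexp (entry L m l) = ((nth 0 d m + nth 0 e l + h1e (nth 0 s m) (nth 0 t l)) %% 4)%N.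
  by apply/eqP/(allP (ok m _)); rewrite mem_iota ltn_ord.
move: Em; rewrite /entry LE (nth_map 0) ?(perm_size pIs) ?size_iota ?ltn_ord //.
rewrite -rhoE !nth_codom_ord -sgE -tgE permKV => Em.
by rewrite Hq code_val_i Em expr_mod ?expCi4 // H1E !exprD.
Qed.

Lemma CHM6_i_equiv_H1 H q : is_CHM H -> (forall j l, q j l < 3)%N ->
  (forall j l, H j l = code_val 'i (q j l)) -> complex_equivalent H H1.
Proof.
move=> HC qlt Hq.
have ii : 'i * 'i^* = 1 :> C by rewrite -normCK normCi expr1n.
have nri : 'i^* != 'i :> C.
  by rewrite conjCi eq_sym -subr_eq0 opprK -mulr2n mulrn_eq0 negb_or neq0Ci.
have [L Lc pL] := code_clique_of_CHM ii nri HC qlt Hq.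
have /andP[_ /has_certP[s [t [d [e cert]]]]] := allP code_cliques_certified L Lc.
exact: cert_equiv Hq pL cert.
Qed.

Definition swap_code (c : nat) : nat := if c is 1%N then 2%N else if c is 2%N then 1%N else c.

Lemma code_val_opp a c : (c < 3)%N -> code_val (- a) c = code_val a (swap_code c).
Proof. by case: c => [|[|[|c]]] //= _; rewrite opprK. Qed.

End CodedRows.

Theorem mainTheorem6 (R : realType) (a : R[i]) (H : 'M[R[i]]_6) :
  `|a| = 1 ->
  is_CHM H ->
  (forall i j, H i j \in [:: 1; a; - a]) ->
  complex_equivalent H H1.
Proof.
move=> na HC Hin.
have aa : a * a^* = 1 by rewrite -normCK na expr1n.
have nra := CHM6_not_real na HC Hin.
have [q qlt Hq] := code_of_entries Hin.
have [L Lc pL] := code_clique_of_CHM aa nra HC qlt Hq.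
have /andP[imL _] := allP code_cliques_certified L Lc.
case: (unit_eq_pmi aa (imag_of_code_clique aa nra HC Hq pL imL)) => ai.
  by apply: CHM6_i_equiv_H1 HC qlt _; rewrite -ai.
apply: (CHM6_i_equiv_H1 HC (q := fun j l => swap_code (q j l))).
  by move=> j l; case: (q j l) (qlt j l) => [|[|[|]]].
by move=> j l; rewrite Hq ai code_val_opp.
Qed.
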